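(* Let $A$, $W$, $L$, $\{M_x\}$, $\{L_x\}$ be as in the context, satisfying Axioms 1–13, let $X$ be the set of $\sim$-classes of $L$, let $\varphi_x:X\to X$ ($x\in A$) be the invertible maps with $[u]\varphi_x=[v]\iff(u,v)\in L_x$ for $u,v\in L$, and let $H$ be the group generated by the maps $\varphi_x$ under composition, acting on $X$ on the right. Then the action of $H$ on $X$ is transitive.
   Context: $A$ is a finite alphabet, $A^\ast$ its finite words, $\epsilon$ the empty word. $W$ is a finite state automaton with $L=L(W)$, and for each $x\in A\sqcup\{\epsilon\}$, $M_x$ is a two-tape bounded asynchronous automaton over $A$ with $L_x=L(M_x)$. (A two-tape asynchronous automaton is a partial deterministic finite state automaton over $A\sqcup\{\$\}$ with states partitioned into $S_L,S_R$; it accepts $(u,v)$ iff some shuffle of $(u\$,v\$)$ is read along a path from the start state to an accept state with letters of $u\$$ read in $S_L$-states and letters of $v\$$ in $S_R$-states. It is bounded with constant $k$ if it never reads more than $k$ letters in a row from one tape.) The axioms (variables over $A^\ast$): (1) $\exists w\,(w\in L)$; (2) for $x\in A\cup\{\epsilon\}$, $(w,v)\in L_x\Rightarrow w,v\in L$; (3) $w\in L\Rightarrow(w,w)\in L_\epsilon$; (4) $(u,v)\in L_\epsilon\Rightarrow(v,u)\in L_\epsilon$; (5) $(u,v),(v,w)\in L_\epsilon\Rightarrow(u,w)\in L_\epsilon$; and for each $x\in A$: (6) $u\in L\Rightarrow\exists v\,(u,v)\in L_x$; (7) $(u,v)\in L_x\wedge(v,w)\in L_\epsilon\Rightarrow(u,w)\in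 L_x$; (8) $(u,v)\in L_\epsilon\wedge(u,w)\in L_x\Rightarrow(v,w)\in L_x$; (9) $v\in L\Rightarrow\exists u\,(u,v)\in L_x$; (10) $(u,v)\in L_x\wedge(u,w)\in L_\epsilon\Rightarrow(w,v)\in L_x$; (11) $(u,v)\in L_\epsilon\wedge(w,u)\in L_x\Rightarrow(w,v)\in L_x$. For $w=\sigma_1\cdots\sigma_n$ ($\sigma_i\in A$), $[v]\varphi_w=[u]$ abbreviates $\exists v_1,\ldots,v_{n-1}:(v,v_1)\in L_{\sigma_1}\wedge\cdots\wedge(v_{n-1},u)\in L_{\sigma_n}$ (for empty $w$: $(v,u)\in L_\epsilon$). (12) $\forall u,w,w'\,((uw\in L\wedge uw'\in L)\Rightarrow\forall v\,([v]\varphi_w=[uw]\iff[v]\varphi_{w'}=[uw']))$; (13) with $c$ the maximum number of states of $W$, $M_\epsilon$, the $M_x$, and $k$ the largest boundedness constant of the $M_x$, $M_\epsilon$: for each word $w$ over $A$ of length at most $2c+2k$, $\exists u\,([u]\varphi_w=[u])\Rightarrow\forall u\,([u]\varphi_w=[u])$. The relation $u\sim v\iff(u,v)\in L_\epsilon$ is an equivalence relation on $L$, with classes $[u]$. *)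

From mathcomp Require Import all_boot.
Set Implicit Arguments. Unset Strict Implicit. Unset Printing Implicit Defensive.

Record dfa (A : Type) := DFA {
  d_state : finType;
  d_start : d_state;
  d_acc   : pred d_state;
  d_trans : d_state -> A -> option d_state }.

Fixpoint d_run (A : Type) (D : dfa A) (s : d_state D) (w : seq A)
  : option (d_state D) :=
  match w with
  | [::] => Some s
  | a :: w' => match d_trans s a with Some s' => d_run s' w' | None => None end
  end.

Definition dfa_lang (A : Type) (D : dfa A) (w : seq A) : Prop :=
  match d_run (d_start D) w with Some s => d_acc s = true | None => False end.

(* Alphabet A ⊔ {$} is [option A], with None = $.  States with
   [t_left s = true] form S_L (read the left tape), the others S_R. *)
Record tta (A : Type) := TTA {
  t_state : finType;
  t_left  : pred t_state;
  t_start : t_state;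
  t_acc   : pred t_state;
  t_trans : t_state -> option A -> option t_state }.

(* configuration: current state, unread part of left tape, of right tape *)
Definition tconf (A : Type) (M : tta A) :=
  (t_state M * seq (option A) * seq (option A))%type.

Definition tape (A : Type) (u : seq A) : seq (option A) := rcons (map Some u) None.

(* one reading step; the boolean says which tape is read (true = left) *)
Inductive tstep (A : Type) (M : tta A) : bool -> tconf M -> tconf M -> Prop :=
| tstepL (s : t_state M) a l r s' :
    t_left s -> t_trans s a = Some s' -> tstep true (s, a :: l, r) (s', l, r)
| tstepR (s : t_state M) a l r s' :
    ~~ t_left s -> t_trans s a = Some s' -> tstep false (s, l, a :: r) (s', l, r).

Inductive treach (A : Type) (M : tta A) : tconf M -> tconf M -> Prop :=
| treach_refl c : treach c c
| treach_step b c c' c'' : tstep b c c' -> treach c' c'' -> treach c c''.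

Definition tinit (A : Type) (M : tta A) (u v : seq A) : tconf M :=
  (t_start M, tape u, tape v).

Definition tta_lang (A : Type) (M : tta A) (u v : seq A) : Prop :=
  exists s, treach (tinit M u v) (s, [::], [::]) /\ t_acc s = true.

Inductive tsame (A : Type) (M : tta A) (b : bool) : nat -> tconf M -> Prop :=
| tsame0 c : tsame b 0 c
| tsameS n c c' : tstep b c c' -> tsame b n c' -> tsame b n.+1 c.

Definition tta_bounded (A : Type) (M : tta A) (k : nat) : Prop :=
  forall (u v : seq A) (c : tconf M), treach (tinit M u v) c ->
    forall b : bool, ~ tsame b k.+1 c.

Section AxSec.
Variable A : Type.
Variable L : seq A -> Prop.
(* Lx None = L_epsilon, Lx (Some x) = L_x *)
Variable Lx : option A -> seq A -> seq A -> Prop.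

(* [v] phi_w = [u] *)
Fixpoint phi_chain (w : seq A) (v u : seq A) : Prop :=
  match w with
  | [::] => Lx None v u
  | s :: w' =>
      match w' with
      | [::] => Lx (Some s) v u
      | _ :: _ => exists v1, Lx (Some s) v v1 /\ phi_chain w' v1 u
      end
  end.

Definition Axm1 := exists w, L w.
Definition Axm2 := forall (x : option A) w v, Lx x w v -> L w /\ L v.
Definition Axm3 := forall w, L w -> Lx None w w.
Definition Axm4 := forall u v, Lx None u v -> Lx None v u.
Definition Axm5 := forall u v w, Lx None u v -> Lx None v w -> Lx None u w.
Definition Axm6 := forall (x : A) u, L u -> exists v, Lx (Some x) u v.
Definition Axm7 := forall (x : A) u v w, Lx (Some x) u v -> Lx None v w -> Lx (Some x) u w.
Definition Axm8 := forall (x : A) u v w, Lx None u v -> Lx (Some x) u w -> Lx (Some x) v w.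
Definition Axm9 := forall (x : A) v, L v -> exists u, Lx (Some x) u v.
Definition Axm10 := forall (x : A) u v w, Lx (Some x) u v -> Lx None u w -> Lx (Some x) w v.
Definition Axm11 := forall (x : A) u v w, Lx None u v -> Lx (Some x) w u -> Lx (Some x) w v.
Definition Axm12 := forall u w w', L (u ++ w) -> L (u ++ w') ->
  forall v, phi_chain w v (u ++ w) <-> phi_chain w' v (u ++ w').
Definition Axm13 (bound : nat) := forall w : seq A, size w <= bound ->
  (exists u, phi_chain w u u) -> forall u, L u -> phi_chain w u u.

Definition Hyps_1_13 (bound : nat) :=
  Axm1 /\ Axm2 /\ Axm3 /\ Axm4 /\ Axm5 /\ Axm6 /\ Axm7 /\ Axm8 /\ Axm9 /\ Axm10 /\ Axm11 /\ Axm12 /\ Axm13 bound.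

(* the class [u] as a set of words *)
Definition cls (u : seq A) : seq A -> Prop := fun v => Lx None u v.
Definition isClass (S : seq A -> Prop) : Prop := exists u, L u /\ S = cls u.

(* S phi_x = T (b = true) or S phi_x^{-1} = T (b = false) *)
Definition gen_act (x : A) (b : bool) (S T : seq A -> Prop) : Prop :=
  exists u v, [/\ L u, L v, S = cls u, T = cls v &
    (if b then Lx (Some x) u v else Lx (Some x) v u)].

(* right action of the element of H given by a word in the generators
   phi_x^{+-1}: S (g1 g2 ... gn) = T, applying g1 first *)
Fixpoint word_act (h : seq (A * bool)) (S T : seq A -> Prop) : Prop :=
  match h with
  | [::] => S = T
  | (x, b) :: h' => exists S', gen_act x b S S' /\ word_act h' S' T
  end.

Definition H_transitive : Prop :=
  forall S T, isClass S -> isClass T -> exists h, word_act h S T.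
End AxSec.

Definition cmax (A : finType) (W : dfa A) (M : option A -> tta A) : nat :=
  maxn #|d_state W| (\max_(x : option A) #|t_state (M x)|).

From mathcomp Require Import all_boot.
From Stdlib Require Import FunctionalExtensionality PropExtensionality.

Set Implicit Arguments.
Unset Strict Implicit.

(* Fix w0 in L and a class [v] with [v] phi_w0 = [w0].  Axiom 12 with u = epsilon
   transports this to [v] phi_w = [w] for every w in L, so every class lies in the
   H-orbit of [v]. *)

Section WordAction.
Variables (A : Type) (L : seq A -> Prop) (Lx : option A -> seq A -> seq A -> Prop).
Hypotheses (ax2 : Axm2 L Lx) (ax3 : Axm3 L Lx) (ax4 : Axm4 Lx) (ax5 : Axm5 Lx)
  (ax9 : Axm9 L Lx).

Lemma eq_cls u v : Lx None u v -> cls Lx u = cls Lx v.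
Proof.
move=> huv; apply: functional_extensionality => z.
apply: propositional_extensionality; rewrite /cls.
by split=> [huz | hvz]; [exact: ax5 (ax4 huv) huz | exact: ax5 huv hvz].
Qed.

Lemma word_act_phi_chain w v t :
  phi_chain Lx w v t -> word_act L Lx [seq (x, true) | x <- w] (cls Lx v) (cls Lx t).
Proof.
elim: w v => [|x w IHw] v /=; first exact: eq_cls.
case: w IHw => [|y w] IHw /= => [hvt | [v1 [hvv1 hchain]]].
  by exists (cls Lx t); split=> //; exists v, t; have [] := ax2 hvt.
exists (cls Lx v1); split; last exact: IHw.
by exists v, v1; have [] := ax2 hvv1.
Qed.

Lemma phi_chain_preimage w t : L t -> exists2 v, L v & phi_chain Lx w v t.
Proof.
elim: w t => [|x w IHw] t Lt /=; first by exists t; last exact: ax3.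
case: w IHw => [|y w] IHw.
  by have [u hut] := ax9 x Lt; exists u => //; case: (ax2 hut).
have [v1 Lv1 hchain] := IHw t Lt.
have [u huv1] := ax9 x Lv1.
by exists u; [case: (ax2 huv1) | exists v1].
Qed.

Lemma word_act_cat h1 h2 S T U :
  word_act L Lx h1 S T -> word_act L Lx h2 T U -> word_act L Lx (h1 ++ h2) S U.
Proof.
elim: h1 S => [|[x b] h1 IHh1] S /=; first by move=> ->.
by move=> [S' [hgen hword]] hword2; exists S'; split; last exact: IHh1 hword2.
Qed.

Definition word_inv (h : seq (A * bool)) := rev [seq (p.1, ~~ p.2) | p <- h].

Lemma word_act_inv h S T : word_act L Lx h S T -> word_act L Lx (word_inv h) T S.
Proof.
elim: h S T => [|[x b] h IHh] S T /=; first by move=> ->.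
move=> [S' [[u [v [Lu Lv -> -> huv]]] hword]].
rewrite /word_inv /= rev_cons -cats1.
apply: word_act_cat (IHh _ _ hword) _ => /=.
by exists (cls Lx u); split=> //; exists v, u; split=> //; case: b huv.
Qed.

Lemma H_transitive_of_root v :
  (forall w, L w -> phi_chain Lx w v w) -> H_transitive L Lx.
Proof.
move=> hroot S T [s [Ls ->]] [t [Lt ->]].
have hs := word_act_phi_chain (hroot s Ls).
have ht := word_act_phi_chain (hroot t Lt).
by eexists; exact: word_act_cat (word_act_inv hs) ht.
Qed.

Lemma exists_phi_chain_root :
  Axm1 L -> Axm12 L Lx -> exists v, forall w, L w -> phi_chain Lx w v w.
Proof.
move=> [w0 Lw0] ax12.
have [v _ hv] := phi_chain_preimage w0 Lw0.
by exists v => w Lw; apply: (ax12 [::] w0 w Lw0 Lw v).1.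
Qed.

End WordAction.

Theorem mainTheorem10 (A : finType) (W : dfa A) (M : option A -> tta A)
    (kb : option A -> nat) :
  (forall x : option A, tta_bounded (M x) (kb x)) ->
  Hyps_1_13 (dfa_lang W) (fun x => tta_lang (M x))
    (2 * cmax W M + 2 * \max_(x : option A) kb x) ->
  H_transitive (dfa_lang W) (fun x => tta_lang (M x)).
Proof.
move=> _ [ax1 [ax2 [ax3 [ax4 [ax5 [_ [_ [_ [ax9 [_ [_ [ax12 _]]]]]]]]]]]].
have [v hroot] := exists_phi_chain_root ax2 ax3 ax9 ax1 ax12.
exact: (H_transitive_of_root ax2 ax4 ax5 hroot).
Qed.
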